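(* Let $k>l\ge0$ be integers with $k+l\ge3$, let $\theta\in\mathbb{R}$, $\xi=e^{i\theta}$, $f:\mathbb{N}\to[0,\infty)$, and $A=\xi(a^\dagger)^ka^l+\xi^*(a^\dagger)^la^k+f(a^\dagger a)$ with domain $\mathcal{D}_0$. Assume $f(n)/\beta^{kl}_n$ admits an asymptotic expansion in powers of $n^{-1/2}$, $$\frac{f(n)}{\beta^{kl}_n}\sim\kappa+\frac{L_1}{n^{1/2}}+\frac{L_2}{n}+\cdots$$ with $\kappa<2$. Then $A$ is unbounded from below, and so is every self-adjoint extension of $A$.
   Context: $\mathbb{N}=\{0,1,2,\dots\}$. $\mathcal{H}$ is a separable complex Hilbert space with orthonormal basis $(\phi_n)_{n\in\mathbb{N}}$; $\mathcal{D}_0$ is the set of finite linear combinations of the $\phi_n$. The operators $a,a^\dagger$ have domain $\mathcal{D}_0$ and act by $a\phi_n=\sqrt{n}\,\phi_{n-1}$ ($a\phi_0=0$), $a^\dagger\phi_n=\sqrt{n+1}\,\phi_{n+1}$, extended linearly. $f(a^\dagger a)$ has domain $\mathcal{D}_0$ and $f(a^\dagger a)\phi_n=f(n)\phi_n$. For integers $x$ and $s\ge0$, $(x,s)=x(x+1)\cdots(x+s-1)$ ($=1$ if $s=0$), with $(x,s)=0$ whenever $x$ is a negative integer; $\beta^{kl}_n=\sqrt{(n-l+1,l)(n-l+1,k)}$. A function $g:\mathbb{N}\to\mathbb{C}$ admits the asymptotic expansion $g(n)\sim\sum_{s\ge0}\lambda_sn^{-s/2}$ if for every $S$ there are $C,N$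 with $|g(n)-\sum_{s=0}^S\lambda_sn^{-s/2}|\le Cn^{-(S+1)/2}$ for $n\ge N$. *)

From Stdlib Require Import Reals ZArith.
From Coquelicot Require Import Coquelicot.
Open Scope R_scope.

(* The Hilbert space H is realized as l^2(N;C), phi_n being the n-th unit
   sequence; a vector is identified with its coefficient sequence. *)
Definition vec := nat -> C.

Definition l2 (x : vec) : Prop := ex_series (fun n => (Cmod (x n)) ^ 2).

Definition inner (x y : vec) : C :=
  (Series (fun n => Re (Cmult (Cconj (x n)) (y n))),
   Series (fun n => Im (Cmult (Cconj (x n)) (y n)))).

Definition norm2 (x : vec) : R := Series (fun n => (Cmod (x n)) ^ 2).

Definition D0 (x : vec) : Prop := exists N : nat, forall n, (N <= n)%nat -> x n = RtoC 0.

(* annihilation / creation operators acting on coefficient sequences: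
   a phi_n = sqrt n phi_{n-1},  a^dag phi_n = sqrt (n+1) phi_{n+1} *)
Definition aop (x : vec) : vec := fun m => Cmult (RtoC (sqrt (INR (S m)))) (x (S m)).
Definition adag (x : vec) : vec := fun m =>
  match m with O => RtoC 0 | S p => Cmult (RtoC (sqrt (INR m))) (x p) end.

Definition fN (f : nat -> R) (x : vec) : vec := fun m => Cmult (RtoC (f m)) (x m).

Definition xi (theta : R) : C := (cos theta, sin theta).

Definition Aop (k l : nat) (theta : R) (f : nat -> R) (x : vec) : vec := fun m =>
  Cplus (Cplus (Cmult (xi theta) (Nat.iter k adag (Nat.iter l aop x) m))
               (Cmult (Cconj (xi theta)) (Nat.iter l adag (Nat.iter k aop x) m)))
        (fN f x m).

(* rising factorial (x,s), with (x,s) = 0 for negative integers x *)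
Fixpoint rising_pos (x : Z) (s : nat) : R :=
  match s with O => 1 | S s' => rising_pos x s' * IZR (x + Z.of_nat s') end.
Definition rising (x : Z) (s : nat) : R := if (x <? 0)%Z then 0 else rising_pos x s.

Definition beta (k l n : nat) : R :=
  let x := (Z.of_nat n - Z.of_nat l + 1)%Z in sqrt (rising x l * rising x k).

Definition asymp_expansion (g : nat -> R) (lam : nat -> R) : Prop :=
  forall S0 : nat, exists C0 : R, exists N : nat, forall n : nat, (N <= n)%nat ->
    Rabs (g n - sum_f_R0 (fun s => lam s * Rpower (INR n) (- INR s / 2)) S0)
      <= C0 * Rpower (INR n) (- INR (S0 + 1) / 2).

Definition unbounded_below (D : vec -> Prop) (T : vec -> vec) : Prop :=
  forall M : R, exists psi : vec, D psi /\ 0 < norm2 psi /\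
    Re (inner psi (T psi)) < M * norm2 psi.

Definition self_adjoint (D : vec -> Prop) (T : vec -> vec) : Prop :=
  (forall x, D x -> l2 x /\ l2 (T x)) /\
  (D (fun _ => RtoC 0)) /\
  (forall x y, D x -> D y -> D (fun n => Cplus (x n) (y n)) /\
      T (fun n => Cplus (x n) (y n)) = (fun n => Cplus (T x n) (T y n))) /\
  (forall (c : C) x, D x -> D (fun n => Cmult c (x n)) /\
      T (fun n => Cmult c (x n)) = (fun n => Cmult c (T x n))) /\
  (forall x y, D x -> D y -> inner (T x) y = inner x (T y)) /\
  (* domain of the adjoint of T is contained in D, and the adjoint equals T there *)
  (forall y z, l2 y -> l2 z -> (forall x, D x -> inner (T x) y = inner x z) ->
      D y /\ T y = z).

Definition self_adjoint_extension (k l : nat) (theta : R) (f : nat -> R)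
  (D : vec -> Prop) (T : vec -> vec) : Prop :=
  self_adjoint D T /\ (forall x, D0 x -> D x /\ T x = Aop k l theta f x).

From Stdlib Require Import Reals ZArith Lia Lra.
From Coquelicot Require Import Coquelicot.
Open Scope R_scope.

(* [A] couples [phi_n] only to [phi_(n +- (k-l))], with
   [<phi_(n+k-l), A phi_n> = xi beta_n]: along an arithmetic progression of
   step [k - l] it is a Jacobi matrix with diagonal [f] and off-diagonal
   entries [xi beta].  For the trial vector
   [psi = sum_(j<J) e^(i j (theta+PI)) phi_(N + j (k-l))] every off-diagonal
   term contributes [-beta], so [<psi, A psi> <= J (2-eps) max beta - 2 (J-1) min beta]
   over the window once [f <= (2-eps) beta] there, which [kappa < 2] provides
   far out, while [|psi|^2 = J].  For fixed [J] the window is short compared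
   with [N], so [max beta <= (1 + eps/4) min beta]; with [J eps >= 6] the energy
   is at most [-beta_N], which beats [M J] as [N] grows.  A self-adjoint
   extension agrees with [A] on [D0] and so inherits the trial vectors. *)

Fixpoint rsum (g : nat -> R) (n : nat) : R :=
  match n with O => 0 | S n' => rsum g n' + g n' end.

Lemma rsum_ext g h n : (forall i, (i < n)%nat -> g i = h i) -> rsum g n = rsum h n.
Proof.
  induction n as [|n IH]; intros H; simpl; [reflexivity|].
  rewrite IH, (H n); [reflexivity | lia | intros; apply H; lia].
Qed.

Lemma rsum_const c n : rsum (fun _ => c) n = INR n * c.
Proof. induction n as [|n IH]; simpl rsum; [simpl; ring|]. rewrite IH, S_INR; ring. Qed.

Lemma rsum_le_const g c n : (forall i, (i < n)%nat -> g i <= c) -> rsum g n <= INR n * c.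
Proof.
  induction n as [|n IH]; intros H; simpl rsum; [simpl; lra|].
  rewrite S_INR. assert (g n <= c) by (apply H; lia).
  assert (rsum g n <= INR n * c) by (apply IH; intros; apply H; lia). lra.
Qed.

Lemma rsum_shift g n : rsum g (S n) = g O + rsum (fun i => g (S i)) n.
Proof. induction n as [|n IH]; simpl rsum in *; [ring|]. rewrite IH; ring. Qed.

Lemma rsum_zero_tail g a b : (a <= b)%nat ->
  (forall t, (a <= t < b)%nat -> g t = 0) -> rsum g b = rsum g a.
Proof.
  induction b as [|b IH]; intros Hab H.
  - now replace a with O by lia.
  - destruct (Nat.eq_dec a (S b)) as [->|Ha]; [reflexivity|].
    simpl rsum. rewrite IH, (H b); [ring | lia | lia | intros; apply H; lia].
Qed.

Lemma sum_n_rsum g n : sum_n g n = rsum g (S n).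
Proof.
  induction n as [|n IH]; [rewrite sum_O; simpl; apply eq_sym, Rplus_0_l|].
  rewrite sum_Sn, IH. reflexivity.
Qed.

Lemma Series_finite_support g T :
  (forall t, (T <= t)%nat -> g t = 0) -> Series g = rsum g T.
Proof.
  intros H. apply is_series_unique. change (is_lim_seq (sum_n g) (rsum g T)).
  apply is_lim_seq_ext_loc with (fun _ => rsum g T); [|apply is_lim_seq_const].
  exists T. intros n Hn. rewrite sum_n_rsum.
  symmetry; apply rsum_zero_tail; [lia|]. intros t Ht; apply H; lia.
Qed.

Lemma Series_sparse_support g (sigma : nat -> nat) J :
  (forall i j, (i < j)%nat -> (sigma i < sigma j)%nat) ->
  (forall t, (forall j, (j < J)%nat -> sigma j <> t) -> g t = 0) ->
  Series g = rsum (fun j => g (sigma j)) J.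
Proof.
  intros Hmono Hsupp.
  assert (Hle : forall i j, (i <= j)%nat -> (sigma i <= sigma j)%nat).
  { intros i j Hij. destruct (Nat.eq_dec i j) as [->|]; [lia|].
    apply Nat.lt_le_incl, Hmono. lia. }
  rewrite (Series_finite_support g (sigma J)).
  2:{ intros t Ht. apply Hsupp. intros j Hj. specialize (Hmono j J Hj). lia. }
  assert (Hprefix : forall n, (n <= J)%nat ->
            rsum g (sigma n) = rsum (fun j => g (sigma j)) n).
  { induction n as [|n IH]; intros Hn.
    - simpl. rewrite (rsum_zero_tail g 0); [reflexivity|lia|].
      intros t Ht. apply Hsupp. intros j _. specialize (Hle 0%nat j ltac:(lia)). lia.
    - rewrite (rsum_zero_tail g (S (sigma n))).
      + simpl rsum. rewrite IH by lia. reflexivity.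
      + specialize (Hmono n (S n) ltac:(lia)). lia.
      + intros t Ht. apply Hsupp. intros j _.
        destruct (Nat.le_gt_cases j n) as [Hj|Hj].
        * specialize (Hle j n Hj). lia.
        * specialize (Hle (S n) j Hj). lia. }
  apply Hprefix. lia.
Qed.

Lemma rsum_path_le h J X L : (1 <= J)%nat ->
  (forall j, (j < J)%nat ->
     h j <= X - (if (j =? 0)%nat then 0 else L) - (if (S j <? J)%nat then L else 0)) ->
  rsum h J <= INR J * X - 2 * (INR J - 1) * L.
Proof.
  intros HJ H.
  destruct J as [|[|J]]; [lia| |].
  - specialize (H O ltac:(lia)). simpl in *. lra.
  - assert (Hfirst : h O <= X - L).
    { specialize (H O ltac:(lia)). simpl in H. lra. }
    assert (Hlast : h (S J) <= X - L).
    { specialize (H (S J) ltac:(lia)). rewrite Nat.ltb_irrefl in H. simpl in H. lra. }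
    assert (Hmid : rsum (fun i => h (S i)) J <= INR J * (X - 2 * L)).
    { apply rsum_le_const. intros i Hi. specialize (H (S i) ltac:(lia)).
      replace (S (S i) <? S (S J))%nat with true in H by (symmetry; apply Nat.ltb_lt; lia).
      simpl in H. lra. }
    change (rsum h (S (S J))) with (rsum h (S J) + h (S J)).
    rewrite rsum_shift, !S_INR. lra.
Qed.

Fixpoint rfact (x j : nat) : R :=
  match j with O => 1 | S j' => rfact x j' * INR (x + j') end.

Lemma rising_pos_of_nat x j : rising_pos (Z.of_nat x) j = rfact x j.
Proof.
  induction j as [|j IH]; [reflexivity|]. simpl.
  rewrite IH, INR_IZR_INZ, Nat2Z.inj_add. reflexivity.
Qed.

Lemma rfact_nonneg x j : 0 <= rfact x j.
Proof. induction j; simpl; [lra|]. apply Rmult_le_pos; [assumption|apply pos_INR]. Qed.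

Lemma rfact_ge_pow x j : INR x ^ j <= rfact x j.
Proof.
  induction j as [|j IH]; simpl; [lra|]. rewrite Rmult_comm.
  apply Rmult_le_compat; [apply pow_le, pos_INR|apply pos_INR|exact IH|].
  apply le_INR; lia.
Qed.

Lemma rfact_mono x y j : (x <= y)%nat -> rfact x j <= rfact y j.
Proof.
  intros Hxy. induction j as [|j IH]; simpl; [lra|].
  apply Rmult_le_compat; [apply rfact_nonneg|apply pos_INR|exact IH|].
  apply le_INR; lia.
Qed.

Lemma rfact_add_le x c j : (0 < x)%nat ->
  rfact (x + c) j <= (1 + INR c / INR x) ^ j * rfact x j.
Proof.
  intros Hx. assert (Hx' : 0 < INR x) by (apply lt_0_INR; lia).
  induction j as [|j IH]; simpl; [lra|].
  assert (Hstep : INR (x + c + j) <= (1 + INR c / INR x) * INR (x + j)).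
  { rewrite !plus_INR.
    replace ((1 + INR c / INR x) * (INR x + INR j))
      with (INR x + INR c + INR j + INR c * INR j / INR x) by (field; lra).
    assert (0 <= INR c * INR j / INR x)
      by (apply Rmult_le_pos; [apply Rmult_le_pos; apply pos_INR|left; apply Rinv_0_lt_compat; lra]).
    lra. }
  replace ((1 + INR c / INR x) * (1 + INR c / INR x) ^ j * (rfact x j * INR (x + j)))
    with (((1 + INR c / INR x) ^ j * rfact x j) * ((1 + INR c / INR x) * INR (x + j))) by ring.
  apply Rmult_le_compat; [apply rfact_nonneg|apply pos_INR|exact IH|exact Hstep].
Qed.

Lemma pow_1plus_le y K : 0 <= y -> 2 * INR K * y <= 1 -> (1 + y) ^ K <= 1 + 2 * INR K * y.
Proof.
  induction K as [|K IH]; intros Hy HK; simpl pow; [simpl; lra|].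
  rewrite S_INR in *. assert (0 <= INR K) by apply pos_INR.
  assert ((1 + y) ^ K <= 1 + 2 * INR K * y) by (apply IH; nra).
  assert (0 <= (1 + y) ^ K) by (apply pow_le; lra).
  nra.
Qed.

Lemma beta_add_l k l m : beta k l (m + l) = sqrt (rfact (S m) l * rfact (S m) k).
Proof.
  unfold beta, rising.
  replace (Z.of_nat (m + l) - Z.of_nat l + 1)%Z with (Z.of_nat (S m)) by lia.
  replace (Z.of_nat (S m) <? 0)%Z with false by (symmetry; apply Z.ltb_ge; lia).
  now rewrite !rising_pos_of_nat.
Qed.

Lemma beta_mono k l n n' : (l <= n <= n')%nat -> beta k l n <= beta k l n'.
Proof.
  intros H.
  replace n with (n - l + l)%nat by lia. replace n' with (n' - l + l)%nat by lia.
  rewrite !beta_add_l. apply sqrt_le_1_alt.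
  apply Rmult_le_compat; try apply rfact_nonneg; apply rfact_mono; lia.
Qed.

Lemma beta_ge k l n : (2 <= k + l)%nat -> (l <= n)%nat -> INR (n - l + 1) <= beta k l n.
Proof.
  intros HK Hn. set (x := INR (n - l + 1)).
  assert (Hx : 1 <= x) by (unfold x; rewrite plus_INR; simpl; pose proof (pos_INR (n - l)); lra).
  replace n with (n - l + l)%nat by lia. rewrite beta_add_l.
  rewrite <- (sqrt_pow2 x) by lra. apply sqrt_le_1_alt.
  replace (S (n - l)) with (n - l + 1)%nat by lia. fold x.
  apply Rle_trans with (x ^ l * x ^ k).
  - rewrite <- pow_add. apply Rle_pow; [lra|lia].
  - apply Rmult_le_compat; try (apply pow_le; lra); apply rfact_ge_pow.
Qed.

Lemma beta_add_le k l n c : (l <= n)%nat ->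
  beta k l (n + c) <= (1 + INR c / INR (n - l + 1)) ^ (k + l) * beta k l n.
Proof.
  intros Hn. destruct (Nat.le_exists_sub l n Hn) as [m [-> _]].
  replace (m + l - l + 1)%nat with (S m) by lia.
  replace (m + l + c)%nat with (m + c + l)%nat by lia.
  rewrite !beta_add_l. replace (S (m + c)) with (S m + c)%nat by lia.
  set (x := S m). set (q := (1 + INR c / INR x)).
  assert (Hq : 1 <= q ^ (k + l)).
  { rewrite <- (pow1 (k + l)). apply pow_incr. split; [lra|].
    assert (0 <= INR c / INR x)
      by (apply Rmult_le_pos; [apply pos_INR|left; apply Rinv_0_lt_compat, lt_0_INR; lia]).
    unfold q; lra. }
  apply Rle_trans with (sqrt (q ^ (k + l) * (rfact x l * rfact x k))).
  - apply sqrt_le_1_alt. rewrite pow_add.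
    replace (q ^ k * q ^ l * (rfact x l * rfact x k))
      with ((q ^ l * rfact x l) * (q ^ k * rfact x k)) by ring.
    apply Rmult_le_compat; try apply rfact_nonneg; apply rfact_add_le; unfold x; lia.
  - rewrite sqrt_mult_alt by lra. apply Rmult_le_compat_r; [apply sqrt_pos|].
    rewrite <- (sqrt_pow2 (q ^ (k + l))) at 2 by lra. apply sqrt_le_1_alt. nra.
Qed.

Lemma beta_window_le k l c eps : 0 < eps <= 1 ->
  exists N, forall n, (N <= n)%nat -> (l <= n)%nat ->
    beta k l (n + c) <= (1 + eps) * beta k l n.
Proof.
  intros Heps. set (K := INR (k + l)).
  destruct (INR_unbounded (2 * K * INR c / eps)) as [N HN].
  exists (N + l)%nat. intros n HNn Hln. set (x := INR (n - l + 1)).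
  assert (Hx : INR N < x) by (apply lt_INR; lia).
  assert (Hx0 : 0 < x) by (apply lt_0_INR; lia).
  assert (Hy : 0 <= INR c / x)
    by (apply Rmult_le_pos; [apply pos_INR | left; apply Rinv_0_lt_compat; lra]).
  assert (Hsmall : 2 * K * (INR c / x) <= eps).
  { assert (HKc : 2 * K * INR c <= eps * x).
    { replace (2 * K * INR c) with (eps * (2 * K * INR c / eps)) by (field; lra).
      apply Rmult_le_compat_l; lra. }
    replace (2 * K * (INR c / x)) with (2 * K * INR c / x) by (field; lra).
    apply Rle_trans with (eps * x / x); [|right; field; lra].
    apply Rmult_le_compat_r; [left; apply Rinv_0_lt_compat; lra | exact HKc]. }
  eapply Rle_trans; [apply beta_add_le, Hln|]. fold x.
  apply Rmult_le_compat_r; [apply sqrt_pos|].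
  eapply Rle_trans; [apply pow_1plus_le; fold K; lra|]. fold K. lra.
Qed.

Lemma asymp_expansion_lead g lam : asymp_expansion g lam ->
  forall eps, 0 < eps -> exists N, forall n, (N <= n)%nat -> Rabs (g n - lam O) <= eps.
Proof.
  intros Has eps Heps.
  destruct (Has O) as (C0 & N & HN).
  destruct (INR_unbounded ((C0 / eps) ^ 2)) as [N2 HN2].
  exists (Nat.max N (S N2)). intros n Hn.
  assert (Hn0 : 0 < INR n) by (apply lt_0_INR; lia).
  assert (HN2n : INR N2 <= INR n) by (apply le_INR; lia).
  specialize (HN n ltac:(lia)). simpl sum_f_R0 in HN.
  replace (- INR 0 / 2) with 0 in HN by (simpl; field). replace (- 0 / 2) with 0 in HN by field.
  replace (- INR (0 + 1) / 2) with (- / 2) in HN by (simpl; field).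
  rewrite Rpower_O, Rpower_Ropp, Rpower_sqrt, Rmult_1_r in HN by exact Hn0.
  assert (Hs : 0 < sqrt (INR n)) by (apply sqrt_lt_R0; exact Hn0).
  assert (Hsqrt : Rabs C0 / eps <= sqrt (INR n)).
  { rewrite <- (sqrt_pow2 (Rabs C0 / eps))
      by (apply Rmult_le_pos; [apply Rabs_pos | left; apply Rinv_0_lt_compat; lra]).
    apply sqrt_le_1_alt. unfold Rdiv in *. rewrite Rpow_mult_distr, pow2_abs, <- Rpow_mult_distr.
    lra. }
  apply Rle_trans with (C0 * / sqrt (INR n)); [exact HN|].
  apply Rmult_le_reg_r with (sqrt (INR n)); [exact Hs|].
  rewrite Rmult_assoc, Rinv_l by lra.
  pose proof (Rle_abs C0).
  apply (Rmult_le_compat_l eps) in Hsqrt; [|lra].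
  replace (eps * (Rabs C0 / eps)) with (Rabs C0) in Hsqrt by (field; lra). lra.
Qed.

Lemma f_eventually_le_beta k l f lam :
  asymp_expansion (fun n => f n / beta k l n) lam -> lam O < 2 ->
  exists eps N, 0 < eps <= 1 /\
    forall n, (N <= n)%nat -> 0 < beta k l n -> f n <= (2 - eps) * beta k l n.
Proof.
  intros Has Hlam. set (eps := Rmin 1 ((2 - lam O) / 2)).
  assert (Heps : 0 < eps <= 1) by (split; [apply Rmin_glb_lt; lra | apply Rmin_l]).
  assert (Heps2 : eps <= (2 - lam O) / 2) by apply Rmin_r.
  destruct (asymp_expansion_lead _ _ Has eps (proj1 Heps)) as [N HN].
  exists eps, N. split; [exact Heps|]. intros n Hn Hb.
  specialize (HN n Hn). apply Rabs_le_between in HN. cbv beta in HN.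
  assert (f n / beta k l n <= 2 - eps) by lra.
  replace (f n) with (f n / beta k l n * beta k l n) by (field; lra).
  apply Rmult_le_compat_r; lra.
Qed.

Lemma Cmult_sqrt_sqrt a b z : 0 <= a ->
  Cmult (RtoC (sqrt a)) (Cmult (RtoC (sqrt b)) z) = Cmult (RtoC (sqrt (a * b))) z.
Proof. intros Ha. rewrite sqrt_mult_alt, RtoC_mult, Cmult_assoc by exact Ha. reflexivity. Qed.

Lemma iter_aop l x m :
  Nat.iter l aop x m = Cmult (RtoC (sqrt (rfact (S m) l))) (x (m + l)%nat).
Proof.
  revert x m; induction l as [|l IH]; intros x m.
  - simpl. rewrite sqrt_1, Nat.add_0_r, Cmult_1_l. reflexivity.
  - rewrite Nat.iter_succ_r, IH. unfold aop.
    rewrite Cmult_sqrt_sqrt by apply rfact_nonneg.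
    simpl rfact. rewrite <- plus_n_Sm. reflexivity.
Qed.

Lemma iter_adag k y m :
  Nat.iter k adag y (m + k)%nat = Cmult (RtoC (sqrt (rfact (S m) k))) (y m).
Proof.
  induction k as [|k IH].
  - simpl. rewrite sqrt_1, Nat.add_0_r, Cmult_1_l. reflexivity.
  - rewrite <- plus_n_Sm, Nat.iter_succ.
    change (adag ?z (S ?p)) with (Cmult (RtoC (sqrt (INR (S p)))) (z p)).
    rewrite IH, Cmult_sqrt_sqrt by apply pos_INR.
    rewrite Rmult_comm. reflexivity.
Qed.

Lemma Aop_at k l theta f x m : (l <= k)%nat ->
  Aop k l theta f x (m + k)%nat =
  Cplus (Cplus (Cmult (xi theta) (Cmult (RtoC (beta k l (m + l))) (x (m + l)%nat)))
               (Cmult (Cconj (xi theta))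
                      (Cmult (RtoC (beta k l (m + k))) (x (m + k + (k - l))%nat))))
        (Cmult (RtoC (f (m + k)%nat)) (x (m + k)%nat)).
Proof.
  intros Hlk. unfold Aop, fN. cbv beta.
  rewrite iter_adag, iter_aop, Cmult_sqrt_sqrt, Rmult_comm, <- beta_add_l
    by apply rfact_nonneg.
  replace (Nat.iter l adag (Nat.iter k aop x) (m + k)%nat)
    with (Nat.iter l adag (Nat.iter k aop x) (m + k - l + l)%nat) by (f_equal; lia).
  rewrite iter_adag, iter_aop, Cmult_sqrt_sqrt, <- beta_add_l by apply rfact_nonneg.
  replace (m + k - l + l)%nat with (m + k)%nat by lia.
  replace (m + k - l + k)%nat with (m + k + (k - l))%nat by lia.
  reflexivity.
Qed.

Lemma Cconj_xi a : Cconj (xi a) = xi (- a).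
Proof. unfold Cconj, xi; simpl. rewrite cos_neg, sin_neg. reflexivity. Qed.

Lemma Cmod_xi_sqr a : Cmod (xi a) ^ 2 = 1.
Proof.
  unfold Cmod, xi; simpl fst; simpl snd.
  rewrite pow2_sqrt by nra. pose proof (sin2_cos2 a). unfold Rsqr in *. lra.
Qed.

Lemma Re_conj_xi_mul a b c : Re (Cmult (Cconj (xi a)) (Cmult (xi b) (xi c))) = cos (b + c - a).
Proof.
  unfold Re, Cmult, Cconj, xi; simpl.
  replace (b + c - a) with ((b + c) + - a) by ring.
  rewrite cos_plus, cos_plus, sin_plus, cos_neg, sin_neg. ring.
Qed.

Lemma Re_conj_xi_diag a w1 w2 r1 r2 z1 z2 F :
  Re (Cmult (Cconj (xi a))
        (Cplus (Cplus (Cmult w1 (Cmult (RtoC r1) z1)) (Cmult w2 (Cmult (RtoC r2) z2)))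
               (Cmult (RtoC F) (xi a))))
  = r1 * Re (Cmult (Cconj (xi a)) (Cmult w1 z1))
    + r2 * Re (Cmult (Cconj (xi a)) (Cmult w2 z2)) + F.
Proof.
  destruct w1, w2, z1, z2. pose proof (sin2_cos2 a) as Ha. unfold Rsqr in Ha.
  unfold Re, Cmult, Cconj, Cplus, RtoC, xi in *; simpl.
  replace F with (F * (sin a * sin a + cos a * cos a)) at 3 by (rewrite Ha; ring).
  ring.
Qed.

Lemma Re_conj_mul_0 z w : Re (Cmult (Cconj z) (Cmult w (RtoC 0))) = 0.
Proof. rewrite !Cmult_0_r. reflexivity. Qed.

(* The vector [sum_(j<J) e^(i j phi) phi_(N0 + j d)]. *)
Definition ladder (N0 d J : nat) (phi : R) : vec := fun t =>
  if ((N0 <=? t) && ((t - N0) mod d =? 0) && ((t - N0) / d <? J))%bool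
  then xi (INR ((t - N0) / d) * phi) else RtoC 0.

Lemma ladder_on N0 d J phi j : d <> 0%nat -> (j < J)%nat ->
  ladder N0 d J phi (N0 + j * d)%nat = xi (INR j * phi).
Proof.
  intros Hd Hj. unfold ladder.
  replace (N0 + j * d - N0)%nat with (j * d)%nat by lia.
  rewrite Nat.Div0.mod_mul, Nat.div_mul by exact Hd.
  replace (N0 <=? N0 + j * d)%nat with true by (symmetry; apply Nat.leb_le; lia).
  replace (j <? J)%nat with true by (symmetry; apply Nat.ltb_lt; exact Hj).
  reflexivity.
Qed.

Lemma ladder_off N0 d J phi t : (forall j, (j < J)%nat -> (N0 + j * d)%nat <> t) ->
  ladder N0 d J phi t = RtoC 0.
Proof.
  intros Hoff. unfold ladder.
  destruct (N0 <=? t)%nat eqn:E1, ((t - N0) mod d =? 0)%nat eqn:E2,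
    ((t - N0) / d <? J)%nat eqn:E3; try reflexivity.
  apply Nat.leb_le in E1. apply Nat.eqb_eq in E2. apply Nat.ltb_lt in E3.
  exfalso. apply (Hoff _ E3). pose proof (Nat.div_mod_eq (t - N0) d). lia.
Qed.

Lemma ladder_D0 N0 d J phi : d <> 0%nat -> D0 (ladder N0 d J phi).
Proof.
  intros Hd. exists (N0 + J * d)%nat. intros n Hn.
  apply ladder_off. intros j Hj. nia.
Qed.

Lemma norm2_ladder N0 d J phi : d <> 0%nat -> norm2 (ladder N0 d J phi) = INR J.
Proof.
  intros Hd. unfold norm2.
  rewrite (Series_sparse_support _ (fun j => N0 + j * d)%nat J).
  - rewrite (rsum_ext _ (fun _ => 1)), rsum_const; [ring|].
    intros j Hj. rewrite ladder_on by assumption. apply Cmod_xi_sqr.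
  - intros i j Hij. nia.
  - intros t Ht. rewrite ladder_off, Cmod_0 by exact Ht. ring.
Qed.

Lemma ladder_diag k l theta f N0 J j : (l < k)%nat -> (k <= N0)%nat -> (j < J)%nat ->
  Re (Cmult (Cconj (ladder N0 (k - l) J (theta + PI) (N0 + j * (k - l))%nat))
            (Aop k l theta f (ladder N0 (k - l) J (theta + PI)) (N0 + j * (k - l))%nat))
  = f (N0 + j * (k - l))%nat
    - (if (j =? 0)%nat then 0 else beta k l (N0 + pred j * (k - l)))
    - (if (S j <? J)%nat then beta k l (N0 + j * (k - l)) else 0).
Proof.
  intros Hlk HN Hj. set (d := (k - l)%nat). set (phi := theta + PI).
  assert (Hd : d <> 0%nat) by (unfold d; lia).
  pose proof (Aop_at k l theta f (ladder N0 d J phi) (N0 + j * d - k) ltac:(lia)) as HA.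
  replace (N0 + j * d - k + k + (k - l))%nat with (N0 + S j * d)%nat in HA by (unfold d; nia).
  replace (N0 + j * d - k + k)%nat with (N0 + j * d)%nat in HA by lia.
  rewrite HA, ladder_on, Re_conj_xi_diag by assumption.
  assert (Hdown : j <> 0%nat -> Re (Cmult (Cconj (xi (INR j * phi)))
      (Cmult (xi theta) (ladder N0 d J phi (N0 + j * d - k + l)%nat))) = -1).
  { intros Hj0. destruct j as [|j']; [lia|].
    replace (N0 + S j' * d - k + l)%nat with (N0 + j' * d)%nat by (unfold d; nia).
    rewrite ladder_on, Re_conj_xi_mul by (assumption || lia).
    replace (theta + INR j' * phi - INR (S j') * phi) with (- PI) by (unfold phi; rewrite S_INR; ring).
    rewrite cos_neg. apply cos_PI. }
  assert (Hup : (S j < J)%nat -> Re (Cmult (Cconj (xi (INR j * phi)))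
      (Cmult (Cconj (xi theta)) (ladder N0 d J phi (N0 + S j * d)%nat))) = -1).
  { intros HSj. rewrite ladder_on, (Cconj_xi theta), Re_conj_xi_mul by assumption.
    replace (- theta + INR (S j) * phi - INR j * phi) with PI by (unfold phi; rewrite S_INR; ring).
    apply cos_PI. }
  assert (Hfirst : j = 0%nat -> ladder N0 d J phi (N0 + j * d - k + l)%nat = RtoC 0).
  { intros ->. apply ladder_off. intros i _. unfold d. lia. }
  assert (Hlast : (J <= S j)%nat -> ladder N0 d J phi (N0 + S j * d)%nat = RtoC 0).
  { intros HJ. apply ladder_off. intros i Hi. nia. }
  destruct (Nat.eqb_spec j 0) as [E0|E0], (Nat.ltb_spec (S j) J) as [E1|E1].
  - rewrite Hfirst, Re_conj_mul_0, Hup by assumption. ring.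
  - rewrite Hfirst, Re_conj_mul_0, Hlast, Re_conj_mul_0 by assumption. ring.
  - rewrite Hdown, Hup by assumption.
    replace (N0 + j * d - k + l)%nat with (N0 + pred j * d)%nat by (destruct j; unfold d in *; nia).
    ring.
  - rewrite Hdown, Hlast, Re_conj_mul_0 by assumption.
    replace (N0 + j * d - k + l)%nat with (N0 + pred j * d)%nat by (destruct j; unfold d in *; nia).
    ring.
Qed.

Lemma ladder_energy_le k l theta f N0 J X L :
  (l < k)%nat -> (k <= N0)%nat -> (1 <= J)%nat ->
  (forall j, (j < J)%nat -> f (N0 + j * (k - l))%nat <= X) ->
  (forall j, (j < J)%nat -> L <= beta k l (N0 + j * (k - l))) ->
  Re (inner (ladder N0 (k - l) J (theta + PI))
            (Aop k l theta f (ladder N0 (k - l) J (theta + PI))))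
  <= INR J * X - 2 * (INR J - 1) * L.
Proof.
  intros Hlk HN HJ Hf HL.
  change (Re (inner ?x ?y)) with (Series (fun t => Re (Cmult (Cconj (x t)) (y t)))).
  rewrite (Series_sparse_support _ (fun j => N0 + j * (k - l))%nat J).
  - apply rsum_path_le; [exact HJ|]. intros j Hj.
    rewrite ladder_diag by assumption.
    pose proof (Hf j Hj). pose proof (HL j Hj).
    destruct (Nat.eqb_spec j 0), (Nat.ltb_spec (S j) J); try lra.
    + pose proof (HL (pred j) ltac:(lia)). lra.
    + pose proof (HL (pred j) ltac:(lia)). lra.
  - intros i j Hij. nia.
  - intros t Ht. rewrite ladder_off by exact Ht.
    unfold Cconj, Cmult, Re; simpl. ring.
Qed.

Lemma path_energy_le_neg J eps B0 B1 : 0 < eps <= 1 -> 6 <= INR J * eps -> 0 <= B0 ->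
  B1 <= (1 + eps / 4) * B0 -> INR J * ((2 - eps) * B1) - 2 * (INR J - 1) * B0 <= - B0.
Proof.
  intros Heps HJ HB0 HB1.
  assert ((2 - eps) * B1 <= (2 - eps / 2) * B0).
  { apply Rle_trans with ((2 - eps) * ((1 + eps / 4) * B0)); [apply Rmult_le_compat_l; lra|].
    assert (0 <= eps * eps * B0) by (apply Rmult_le_pos; nra). lra. }
  assert (INR J * ((2 - eps) * B1) <= INR J * ((2 - eps / 2) * B0))
    by (apply Rmult_le_compat_l; [apply pos_INR | assumption]).
  assert (6 * B0 <= INR J * eps * B0) by (apply Rmult_le_compat_r; lra).
  lra.
Qed.

Lemma Aop_unbounded_below k l theta f lam :
  (l < k)%nat -> (2 <= k + l)%nat ->
  asymp_expansion (fun n => f n / beta k l n) lam -> lam O < 2 ->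
  unbounded_below D0 (Aop k l theta f).
Proof.
  intros Hlk HK Has Hlam M.
  destruct (f_eventually_le_beta k l f lam Has Hlam) as (eps & N1 & Heps & Hf).
  set (d := (k - l)%nat).
  destruct (INR_unbounded (6 / eps)) as [J HJ].
  assert (HJeps : 6 <= INR J * eps).
  { replace 6 with (6 / eps * eps) by (field; lra). apply Rmult_le_compat_r; lra. }
  assert (HJ1 : (1 <= J)%nat) by (destruct J; [simpl in HJeps; lra | lia]).
  destruct (beta_window_le k l (J * d) (eps / 4) ltac:(lra)) as [N2 HN2].
  destruct (INR_unbounded (Rabs M * INR J)) as [N3 HN3].
  set (N0 := (k + N1 + N2 + N3)%nat).
  set (B0 := beta k l N0). set (B1 := beta k l (N0 + J * d)).
  assert (HB0 : Rabs M * INR J < B0).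
  { apply Rlt_le_trans with (INR (N0 - l + 1)); [|apply beta_ge; unfold N0; lia].
    apply Rlt_le_trans with (INR N3); [lra | apply le_INR; unfold N0; lia]. }
  assert (HB0pos : 0 < B0) by (pose proof (Rmult_le_pos _ _ (Rabs_pos M) (pos_INR J)); lra).
  assert (HB1 : B1 <= (1 + eps / 4) * B0) by (apply HN2; unfold N0; lia).
  assert (Hwin : forall j, (j < J)%nat -> B0 <= beta k l (N0 + j * d) <= B1).
  { intros j Hj. split; apply beta_mono; unfold N0; nia. }
  assert (Hfwin : forall j, (j < J)%nat -> f (N0 + j * d)%nat <= (2 - eps) * B1).
  { intros j Hj. destruct (Hwin j Hj).
    eapply Rle_trans; [apply Hf; [unfold N0; lia | lra]|].
    apply Rmult_le_compat_l; lra. }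
  pose proof (ladder_energy_le k l theta f N0 J ((2 - eps) * B1) B0 Hlk ltac:(unfold N0; lia)
                HJ1 Hfwin (fun j Hj => proj1 (Hwin j Hj))) as HE.
  exists (ladder N0 d J (theta + PI)). rewrite norm2_ladder by (unfold d; lia).
  split; [apply ladder_D0; unfold d; lia|]. split; [apply lt_0_INR; lia|].
  eapply Rle_lt_trans; [exact HE|].
  eapply Rle_lt_trans; [apply path_energy_le_neg; [exact Heps | exact HJeps | lra | exact HB1]|].
  pose proof (Rle_abs (- M)). rewrite Rabs_Ropp in *. pose proof (pos_INR J). nra.
Qed.

Lemma unbounded_below_extension (D : vec -> Prop) T A :
  (forall x, D0 x -> D x /\ T x = A x) -> unbounded_below D0 A -> unbounded_below D T.
Proof.
  intros Hext HA M. destruct (HA M) as (x & Hx & Hpos & Hlt).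
  destruct (Hext x Hx) as [HD HT].
  exists x. rewrite HT. auto.
Qed.

Theorem proposition4p18 (k l : nat) (theta : R) (f : nat -> R)
  (kappa : R) (lam : nat -> R) :
  (l < k)%nat -> (3 <= k + l)%nat -> (forall n, 0 <= f n) ->
  asymp_expansion (fun n => f n / beta k l n) lam -> lam O = kappa -> kappa < 2 ->
  unbounded_below D0 (Aop k l theta f) /\
  (forall (D : vec -> Prop) (T : vec -> vec),
     self_adjoint_extension k l theta f D T -> unbounded_below D T).
Proof.
  (* Only an upper bound on [f] enters. *)
  intros Hlk HK _ Has Hlam Hkappa.
  assert (HA : unbounded_below D0 (Aop k l theta f)).
  { apply (Aop_unbounded_below k l theta f lam); [exact Hlk | lia | exact Has | lra]. }
  split; [exact HA|].
  intros D T [_ Hext]. exact (unbounded_below_extension D T _ Hext HA).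
Qed.
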